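(* For every convex pentagon $K$ we have $\Omega(K)<2\Delta(K)$. Moreover, the constant $2$ cannot be replaced by a smaller one: for every $\eta<2$ there exists a convex pentagon $K$ with $\Omega(K)>\eta\,\Delta(K)$.
   Context: For a convex pentagon $K=A_1A_2A_3A_4A_5$ (indices modulo $5$), $\Omega(K)=\sum_{k=1}^5\Delta(A_kA_{k+1}A_{k+2})$ is the sum of the areas of the five triangles formed by three consecutive vertices. $\Delta(\cdot)$ denotes area. *)

From mathcomp Require Import all_boot all_order all_algebra.
From mathcomp Require Import reals.
Set Implicit Arguments. Unset Strict Implicit. Unset Printing Implicit Defensive.
Import Order.TTheory GRing.Theory Num.Theory.
Local Open Scope ring_scope.

Section Pentagon.
Variable R : realType.
Definition point := (R * R)%type.

(* twice the signed area of triangle abc (orientation determinant) *)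
Definition orient (a b c : point) : R :=
  (b.1 - a.1) * (c.2 - a.2) - (b.2 - a.2) * (c.1 - a.1).

Definition tri_area (a b c : point) : R := `|orient a b c| / 2.

(* A pentagon A_1..A_5 is a map 'I_5 -> point; indices are taken modulo 5
   via the cyclic successor ordS. *)
Definition nxt (i : 'I_5) : 'I_5 := ordS i.

(* Convex pentagon (vertices in convex position, listed in cyclic order):
   for every edge A_i A_(i+1), all other vertices lie strictly on the same
   side of the line A_i A_(i+1) -- the left side for every edge
   (counterclockwise) or the right side for every edge (clockwise). *)
Definition convex_pentagon (P : 'I_5 -> point) : Prop :=
  (forall i j : 'I_5, j != i -> j != nxt i ->
     0 < orient (P i) (P (nxt i)) (P j)) \/
  (forall i j : 'I_5, j != i -> j != nxt i ->
     orient (P i) (P (nxt i)) (P j) < 0).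

Definition poly_area (P : 'I_5 -> point) : R :=
  `| \sum_(i < 5) ((P i).1 * (P (nxt i)).2 - (P (nxt i)).1 * (P i).2) | / 2.

Definition Omega (P : 'I_5 -> point) : R :=
  \sum_(i < 5) tri_area (P i) (P (nxt i)) (P (nxt (nxt i))).
End Pentagon.

From mathcomp Require Import all_boot all_order all_algebra.
From mathcomp Require Import reals ring lra.
Import Order.TTheory GRing.Theory Num.Theory.
Local Open Scope ring_scope.

(* Write [xyz] for orient x y z, twice the signed area of xyz, and let
   a ... e be a counterclockwise convex pentagon.  Triangulating it in two
   ways, 2 Delta = [abc] + [cde] + [eac] = [abd] + [bcd] + [dea],
   so 2 Delta - Omega = ([eac] + [abd] - [eab]) / 2.  If the bracket
   were <= 0, then [bce] > 0 and [deb] > 0 would force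
   [abd] < [abc] and [eac] < [dea], so the right-hand side of the
   Plucker relation [eab][cda] = [eac][abd] - [abc][dea]
   would be negative while its left-hand side is positive.  A reflection
   reduces clockwise pentagons to counterclockwise ones.  For sharpness, the
   pentagon (0,0), (1,0), (1,t), (1-t,2t), (0,1) has Delta = (1 + t + t^2)/2
   and Omega = 1 + t^2, whose ratio tends to 2 as t tends to 0. *)

Section Pentagon.
Variable R : realType.
Implicit Types (a b c d e : point R) (P : 'I_5 -> point R).

Lemma orient_ear_lt a b c d e :
  0 < orient a b c -> 0 < orient c d a -> 0 < orient e a b ->
  0 < orient e a c -> 0 < orient b c e -> 0 < orient d e b ->
  orient e a b < orient e a c + orient a b d.
Proof.
move=> habc hcda heab heac hbce hdeb.
have plucker : orient e a b * orient c d a =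
    orient e a c * orient a b d - orient a b c * orient d e a.
  by rewrite /orient; ring.
have ebce : orient b c e = orient e a c + orient a b c - orient e a b.
  by rewrite /orient; ring.
have edeb : orient d e b = orient d e a + orient a b d - orient e a b.
  by rewrite /orient; ring.
rewrite ltNge; apply/negP => hge.
have lt_abd : orient a b d < orient a b c by lra.
have lt_eac : orient e a c < orient d e a by lra.
have : orient e a c * orient a b d < orient a b c * orient d e a.
  apply: (lt_trans (y := orient e a c * orient a b c)).
    by rewrite ltr_pM2l.
  by rewrite mulrC ltr_pM2l.
have := mulr_gt0 heab hcda; lra.
Qed.

Lemma ear_sum_lt a b c d e :
  0 < orient a b c -> 0 < orient c d a -> 0 < orient e a b ->
  0 < orient e a c -> 0 < orient b c e -> 0 < orient d e b ->
  orient a b c + orient b c d + orient c d e + orient d e a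
    + orient e a b
  < 2 * (orient a b c + orient c d a + orient d e a).
Proof.
move=> habc hcda heab heac hbce hdeb.
have := @orient_ear_lt _ _ _ _ _ habc hcda heab heac hbce hdeb.
have : 2 * (orient a b c + orient c d a + orient d e a) =
    orient a b c + orient c d e + orient e a c
    + (orient a b d + orient b c d + orient d e a).
  by rewrite /orient; ring.
lra.
Qed.

Lemma ord5_ind (Q : 'I_5 -> Prop) : Q 0 -> Q 1 -> Q 2 -> Q 3 -> Q 4 -> forall i, Q i.
Proof.
move=> Q0 Q1 Q2 Q3 Q4 [[|[|[|[|[|//]]]]] lt_i5];
  [move: Q0 | move: Q1 | move: Q2 | move: Q3 | move: Q4]; congr Q; exact: ord_inj.
Qed.

Lemma nxtE : (nxt 0 = 1) * (nxt 1 = 2) * (nxt 2 = 3) * (nxt 3 = 4) * (nxt 4 = 0).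
Proof. by do !split; apply: val_inj. Qed.

Lemma big_ord5 (F : 'I_5 -> R) : \sum_(i < 5) F i = F 0 + F 1 + F 2 + F 3 + F 4.
Proof.
rewrite !big_ord_recl big_ord0 addr0 !addrA.
by do ![congr (_ + _)]; congr F; apply: val_inj.
Qed.

Definition ccw_pentagon P : Prop :=
  forall i j : 'I_5, j != i -> j != nxt i -> 0 < orient (P i) (P (nxt i)) (P j).

(* [nxt 0] and [1] are equal but not convertible, so the successor is passed as
   [k] and checked by computation together with the side conditions. *)
Lemma ccw_pentagon_orient P (i k j : 'I_5) :
  ccw_pentagon P -> [&& k == nxt i, j != i & j != k] -> 0 < orient (P i) (P k) (P j).
Proof. by move=> ccw /and3P[/eqP -> ji jk]; exact: ccw. Qed.

Lemma shoelace_fan P :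
  \sum_(i < 5) ((P i).1 * (P (nxt i)).2 - (P (nxt i)).1 * (P i).2) =
  orient (P 0) (P 1) (P 2) + orient (P 2) (P 3) (P 0) + orient (P 3) (P 4) (P 0).
Proof. by rewrite big_ord5 !nxtE /orient; ring. Qed.

Lemma ccw_Omega_lt P : ccw_pentagon P -> Omega P < 2 * poly_area P.
Proof.
move=> ccw; have pos i k j := @ccw_pentagon_orient P i k j ccw.
rewrite /Omega /poly_area /tri_area big_ord5 shoelace_fan !nxtE.
rewrite (gtr0_norm (pos 0 1 2 isT)) (gtr0_norm (pos 1 2 3 isT)).
rewrite (gtr0_norm (pos 2 3 4 isT)) (gtr0_norm (pos 3 4 0 isT)).
rewrite (gtr0_norm (pos 4 0 1 isT)).
have := ler_norm (orient (P 0) (P 1) (P 2) + orient (P 2) (P 3) (P 0)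
                  + orient (P 3) (P 4) (P 0)).
have := @ear_sum_lt _ _ _ _ _ (pos 0 1 2 isT) (pos 2 3 0 isT) (pos 4 0 1 isT)
  (pos 4 0 2 isT) (pos 1 2 4 isT) (pos 3 4 1 isT).
lra.
Qed.

Definition mirror (p : point R) : point R := (p.1, - p.2).

Lemma orient_mirror a b c : orient (mirror a) (mirror b) (mirror c) = - orient a b c.
Proof. by rewrite /orient /=; ring. Qed.

Lemma Omega_mirror P : Omega (mirror \o P) = Omega P.
Proof. by apply: eq_bigr => i _; rewrite /tri_area /= orient_mirror normrN. Qed.

Lemma poly_area_mirror P : poly_area (mirror \o P) = poly_area P.
Proof.
rewrite /poly_area -normrN -sumrN; congr (`|_| / 2).
by apply: eq_bigr => i _ /=; ring.
Qed.

Lemma convex_pentagon_ccw P :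
  convex_pentagon P -> ccw_pentagon P \/ ccw_pentagon (mirror \o P).
Proof.
case=> convP; [left | right] => // i j ji jn.
by rewrite /= orient_mirror oppr_gt0; exact: convP.
Qed.

Lemma Omega_lt_twice_area P : convex_pentagon P -> Omega P < 2 * poly_area P.
Proof.
case/convex_pentagon_ccw => [|/ccw_Omega_lt]; first exact: ccw_Omega_lt.
by rewrite Omega_mirror poly_area_mirror.
Qed.

Definition pentagon a b c d e : 'I_5 -> point R :=
  fun i => nth a [:: a; b; c; d; e] i.

Definition near_triangle (t : R) : 'I_5 -> point R :=
  pentagon (0, 0) (1, 0) (1, t) (1 - t, 2 * t) (0, 1).

Lemma near_triangle_ccw t : 0 < t < 1 -> ccw_pentagon (near_triangle t).
Proof.
move=> /andP[t_gt0 t_lt1] i j.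
elim/ord5_ind: i; elim/ord5_ind: j => // _ _; rewrite !nxtE /orient /=; nra.
Qed.

Lemma poly_area_near_triangle t : poly_area (near_triangle t) = (1 + t + t ^+ 2) / 2.
Proof.
rewrite /poly_area big_ord5 !nxtE /= ger0_norm; first by congr (_ / 2); ring.
nra.
Qed.

Lemma Omega_near_triangle t : 0 < t < 1 -> Omega (near_triangle t) = 1 + t ^+ 2.
Proof.
move=> /andP[t_gt0 t_lt1].
rewrite /Omega /tri_area big_ord5 !nxtE /orient /= !ger0_norm; first by field.
all: nra.
Qed.

Lemma Omega_lt_twice_area_sharp (eta : R) : eta < 2 ->
  exists P, convex_pentagon P /\ eta * poly_area P < Omega P.
Proof.
(* With t (6 - eta) = 2 - eta we get
   2 (1 + t^2) - eta (1 + t + t^2) = t ((6 - eta) (1 + t^2) - eta) > 0. *)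
move=> eta_lt2; pose t := (2 - eta) / (6 - eta).
have t_eq : t * (6 - eta) = 2 - eta by rewrite /t mulfVK // gt_eqF //; lra.
have t_gt0 : 0 < t by rewrite divr_gt0 //; lra.
have t_lt1 : t < 1 by rewrite ltr_pdivrMr; lra.
have t_in01 : 0 < t < 1 by rewrite t_gt0 t_lt1.
exists (near_triangle t); split; first by left; exact: near_triangle_ccw.
rewrite poly_area_near_triangle Omega_near_triangle //; clearbody t; nra.
Qed.

End Pentagon.

Theorem lemma3p3 (R : realType) :
  (forall P : 'I_5 -> point R, convex_pentagon P -> Omega P < 2 * poly_area P) /\
  (forall eta : R, eta < 2 ->
     exists P : 'I_5 -> point R, convex_pentagon P /\ eta * poly_area P < Omega P).
Proof. by split; [exact: Omega_lt_twice_area | exact: Omega_lt_twice_area_sharp]. Qed.
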